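(* Let $K$ be a field of characteristic $p>0$ and $A^*$ a graded Hopf algebra over $K$ with a decreasing filtration $\mathfrak F=(F_iA^* )_{i\in\mathbb Z}$ satisfying (E1), (E2), (E3), (E4), (E6), (E7), (E8). A left $A^*$-module $M^*$ with structure map $\alpha\colon A^*\otimes M^*\to M^*$ is unstable with respect to $\mathfrak F$ if and only if $\alpha\big((F_{2i+\varepsilon}A^* )^{2i(p-1)+\varepsilon}\otimes M^k\big)=\{0\}$ for all $i\in\mathbb Z$, $\varepsilon\in\{0,1\}$ and $k\in\mathbb Z$ with $k<2i+\varepsilon$.
   Context: Let $A^*$ be a graded Hopf algebra over a field $K$ of characteristic $p$, with product $\mu$ and a decreasing filtration $\mathfrak F=(F_iA^* )_{i\in\mathbb Z}$ by graded subspaces. A left $A^*$-module $M^*$ with structure map $\alpha$ is unstable if $\alpha(F_{n+1}A^*\otimes M^n)=\{0\}$ for all $n\in\mathbb Z$. Put $E_i^jA^*=(F_iA^* )^j/(F_{i+1}A^* )^j$. Conditions: (E1) $F_iA^*=A^*$ for $i\le0$; (E2) $\bigcap_iF_iA^*=\{0\}$; (E3) each $F_iA^*$ is a left ideal; (E4) $\mu(F_iA^*\otimes A^j)\subset F_{i-j}A^*$ for all $i,j$; (E6) for $i,k\in\mathbb Z$, $\varepsilon\in\{0,1\}$, $E_{2i+\varepsilon}^kA^*=\{0\}$ if $k<2i(p-1)+\varepsilon$ or $2i+\varepsilon+k\not\equiv0,2\pmod{2p}$; (E7) $\dim E_{2i+\varepsilon}^{2i(p-1)+\varepsilon}A^*=1$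 for $i\ge0$, $\varepsilon\in\{0,1\}$; (E8) for all integers $i,j\ge0$ and $\varepsilon\in\{0,1\}$, the map $\tilde\mu_{2i+\varepsilon}^{2i(p-1)+\varepsilon,j}\colon E_{2i+\varepsilon}^{2i(p-1)+\varepsilon}A^*\otimes(A^*/F_{2i-j+\varepsilon+1}A^* )^j\to E_{2i-j+\varepsilon}^{2i(p-1)+j+\varepsilon}A^*$, $[a]\otimes[b]\mapsto[ab]$ (well defined by (E3),(E4)), is an isomorphism. *)

From HB Require Import structures.
From mathcomp Require Import all_boot all_order all_algebra.
Set Implicit Arguments. Unset Strict Implicit. Unset Printing Implicit Defensive.
Import Order.TTheory GRing.Theory Num.Theory.
Local Open Scope ring_scope.

Definition subspace (K : fieldType) (V : lmodType K) (P : V -> Prop) : Prop :=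
  P 0 /\ forall (c : K) (u v : V), P u -> P v -> P (c *: u + v).

Definition graded_vs (K : fieldType) (V : lmodType K) (G : int -> V -> Prop) :
  Prop :=
  [/\ forall j, subspace (G j),
      forall v : V, exists (s : seq int) (f : int -> V),
        (forall j, G j (f j)) /\ v = \sum_(j <- s) f j
    & forall (s : seq int) (f : int -> V), uniq s -> (forall j, G j (f j)) ->
        \sum_(j <- s) f j = 0 -> forall j, j \in s -> f j = 0].

Definition graded_alg (K : fieldType) (A : algType K) (G : int -> A -> Prop) :
  Prop :=
  [/\ graded_vs G, G 0 1
    & forall (j k : int) (a b : A), G j a -> G k b -> G (j + k) (a * b)].

Definition graded_filtration (K : fieldType) (A : algType K)
  (G : int -> A -> Prop) (F : int -> A -> Prop) : Prop :=
  [/\ forall i, subspace (F i),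
      forall i a, F (i + 1) a -> F i a
    & forall i a, F i a -> exists (s : seq int) (f : int -> A),
        (forall j, G j (f j) /\ F i (f j)) /\ a = \sum_(j <- s) f j].

(** E_i^k A = (F_i A)^k / (F_{i+1} A)^k is zero. *)
Definition E_zero (K : fieldType) (A : algType K)
  (G F : int -> A -> Prop) (i k : int) : Prop :=
  forall a, F i a -> G k a -> F (i + 1) a.

(** dim E_i^k A = 1: there is g in (F_i A)^k whose class is nonzero and spans. *)
Definition E_dim1 (K : fieldType) (A : algType K)
  (G F : int -> A -> Prop) (i k : int) : Prop :=
  exists g, [/\ F i g, G k g, ~ F (i + 1) g &
    forall a, F i a -> G k a -> exists c : K, F (i + 1) (a - c *: g)].

(** (E8) for given i, j >= 0 and eps, with s = 2i+eps, d = 2i(p-1)+eps: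
    the map E_s^d (x) (A/F_{s-j+1})^j -> E_{s-j}^{d+j}, [a](x)[b] |-> [ab]
    is an isomorphism.  Since E_s^d is one-dimensional (E7), spanned by the
    class of any g in (F_s A)^d \ F_{s+1}, this says that for such g the map
    [b] |-> [g b] from (A/F_{s-j+1})^j to E_{s-j}^{d+j} is injective and
    surjective. *)
Definition E8_iso (K : fieldType) (A : algType K) (p : nat)
  (G F : int -> A -> Prop) (i j e : int) : Prop :=
  let s := 2 * i + e in
  let d := 2 * i * (p%:Z - 1) + e in
  forall g, F s g -> G d g -> ~ F (s + 1) g ->
    (forall b, G j b -> F (s - j + 1) (g * b) -> F (s - j + 1) b) /\
    (forall x, F (s - j) x -> G (d + j) x ->
       exists b, G j b /\ F (s - j + 1) (x - g * b)).

Definition E1 (K : fieldType) (A : algType K) (F : int -> A -> Prop) : Prop :=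
  forall i a, i <= 0 -> F i a.
Definition E2 (K : fieldType) (A : algType K) (F : int -> A -> Prop) : Prop :=
  forall a, (forall i, F i a) -> a = 0.
Definition E3 (K : fieldType) (A : algType K) (F : int -> A -> Prop) : Prop :=
  forall i (a x : A), F i x -> F i (a * x).
Definition E4 (K : fieldType) (A : algType K) (G F : int -> A -> Prop) : Prop :=
  forall i j (a b : A), F i a -> G j b -> F (i - j) (a * b).
Definition E6 (K : fieldType) (A : algType K) (p : nat)
  (G F : int -> A -> Prop) : Prop :=
  forall i k e : int, e \in [:: 0; 1] ->
    (k < 2 * i * (p%:Z - 1) + e \/
     (((2 * i + e + k) %% (2 * p%:Z))%Z != 0 /\
      ((2 * i + e + k) %% (2 * p%:Z))%Z != 2)) ->
    E_zero G F (2 * i + e) k.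
Definition E7 (K : fieldType) (A : algType K) (p : nat)
  (G F : int -> A -> Prop) : Prop :=
  forall i e : int, 0 <= i -> e \in [:: 0; 1] ->
    E_dim1 G F (2 * i + e) (2 * i * (p%:Z - 1) + e).
Definition E8 (K : fieldType) (A : algType K) (p : nat)
  (G F : int -> A -> Prop) : Prop :=
  forall i j e : int, 0 <= i -> 0 <= j -> e \in [:: 0; 1] ->
    E8_iso p G F i j e.

(** A graded left A-module (M, GM) with structure map alpha, given as a
    bilinear action [act] (alpha(a (x) m) = act a m). *)
Definition graded_module (K : fieldType) (A : algType K) (G : int -> A -> Prop)
  (M : lmodType K) (GM : int -> M -> Prop) (act : A -> M -> M) : Prop :=
  graded_vs GM /\
  (forall (c : K) (a b : A) (m : M), act (c *: a + b) m = c *: act a m + act b m) /\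
  (forall (c : K) (a : A) (m n : M), act a (c *: m + n) = c *: act a m + act a n) /\
  (forall m, act 1 m = m) /\
  (forall (a b : A) (m : M), act (a * b) m = act a (act b m)) /\
  (forall (j k : int) (a : A) (m : M), G j a -> GM k m -> GM (j + k) (act a m)).

Definition unstable (K : fieldType) (A : algType K) (F : int -> A -> Prop)
  (M : lmodType K) (GM : int -> M -> Prop) (act : A -> M -> M) : Prop :=
  forall (n : int) (a : A) (m : M), F (n + 1) a -> GM n m -> act a m = 0.

(* Necessity is immediate, since F_{2i+e} is contained in F_{k+1}.  For
   sufficiency fix m in M^n.  The criterion applied to 1 in F_0 shows that M
   has no negative degrees.  For n >= 0 it suffices, by linearity, to kill m
   with a homogeneous b of degree j lying in F_s, s >= n + 1; this is done by
   downward induction on s.  For s large compared to j, (E6) and (E2) force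
   b = 0.  Otherwise (E6) says that either the piece E_s^j vanishes, so that
   b lies in F_{s+1}, or E_s^j is the target of an (E8) isomorphism; then
   b = g c modulo F_{s+1} with g a generator of a piece of (E7), and g kills
   c m (of degree < 2i+e) by the criterion. *)
From HB Require Import structures.
From mathcomp Require Import all_boot all_order all_algebra.
From mathcomp Require Import zify.
Import Order.TTheory GRing.Theory Num.Theory.
Set Implicit Arguments.
Unset Strict Implicit.
Unset Printing Implicit Defensive.
Local Open Scope ring_scope.

Lemma int_ind_up (P : int -> Prop) (lo : int) :
  P lo -> (forall s : int, lo <= s -> P s -> P (s + 1)) ->
  forall s : int, lo <= s -> P s.
Proof.
move=> Plo PS; suff Pk : forall k : nat, P (lo + k%:Z).
  by move=> s hs; have := Pk `|s - lo|%N; congr P; lia.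
elim=> [|k IH]; first by rewrite addr0.
have -> : lo + k.+1%:Z = lo + k%:Z + 1 by lia.
by apply: PS => //; lia.
Qed.

Lemma int_ind_down (P : int -> Prop) (lo hi : int) :
  (forall s : int, lo <= s -> hi <= s -> P s) ->
  (forall s : int, lo <= s -> P (s + 1) -> P s) -> forall s : int, lo <= s -> P s.
Proof.
move=> Phi PS; suff Pk : forall (k : nat) (s : int), hi <= s + k%:Z -> lo <= s -> P s.
  by move=> s hs; apply: (Pk `|hi - s|%N) => //; lia.
elim=> [|k IH] s hk hs; first by apply: Phi => //; lia.
by apply: PS => //; apply: IH; lia.
Qed.

Lemma int_parity (t : int) : exists i e : int, e \in [:: 0; 1] /\ t = 2 * i + e.
Proof. by exists (t %/ 2)%Z, (t %% 2)%Z; rewrite !inE; lia. Qed.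

(* A degree below a nonnegative filtration index 2i + e lies in the range
   2i(p-1) + e where (E6) makes the graded piece vanish. *)
Lemma below_diagonal (p : nat) (i e j : int) : (2 <= p)%N -> e \in [:: 0; 1] ->
  0 <= 2 * i + e -> j < 2 * i + e -> j < 2 * i * (p%:Z - 1) + e.
Proof. by move=> p2; rewrite !inE; nia. Qed.

(* The pieces E_{2i'+e'}^j not excluded by (E6), with 2i'+e' >= 1, are those
   reached by the isomorphisms of (E8): writing 2i'+e'+j = 2pi + 2e, the piece
   is E_{2i+e-J}^{2i(p-1)+e+J} with J = 2i + e - (2i'+e') >= 0. *)
Lemma E8_line (p : nat) (i' e' j : int) : (2 <= p)%N -> e' \in [:: 0; 1] ->
  1 <= 2 * i' + e' -> 2 * i' * (p%:Z - 1) + e' <= j ->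
  let r := ((2 * i' + e' + j) %% (2 * p%:Z))%Z in (r == 0) || (r == 2) ->
  exists i e J : int, [/\ 0 <= i, e \in [:: 0; 1], 0 <= J,
     2 * i + e - J = 2 * i' + e' & 2 * i * (p%:Z - 1) + e + J = j].
Proof.
move=> p2 he' s1 hd r hr.
have hdiv := divz_eq (2 * i' + e' + j) (2 * p%:Z).
set q := (_ %/ _)%Z in hdiv; rewrite -/r in hdiv.
have [e [he hre]] : exists e : int, e \in [:: 0; 1] /\ r = 2 * e.
  by case/orP: hr => /eqP ->; [exists 0 | exists 1].
exists q, e, (2 * q + e - (2 * i' + e')).
by move: he he'; rewrite !inE => he he'; split; nia.
Qed.

Lemma subspaceB (K : fieldType) (V : lmodType K) (P : V -> Prop) (u v : V) :
  subspace P -> P u -> P v -> P (u - v).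
Proof.
by case=> _ hlin hu hv; have := hlin (-1) v u hv hu; rewrite scaleN1r addrC.
Qed.

Lemma filtration_antitone (K : fieldType) (A : algType K) (F : int -> A -> Prop)
    (i i' : int) (a : A) :
  (forall i a, F (i + 1) a -> F i a) -> i' <= i -> F i a -> F i' a.
Proof.
move=> F_decr hle hF; have -> : i' = i - (i - i') by lia.
apply: (@int_ind_up (fun t => F (i - t) a) 0); last by lia.
- by rewrite subr0.
- by move=> t _ ht; apply: F_decr; have -> : i - (t + 1) + 1 = i - t by lia.
Qed.

Section ActionLinearity.
Variables (K : fieldType) (A : algType K) (M : lmodType K) (act : A -> M -> M).
Hypothesis act_linl :
  forall (c : K) (a b : A) (m : M), act (c *: a + b) m = c *: act a m + act b m.
Hypothesis act_linr :
  forall (c : K) (a : A) (m n : M), act a (c *: m + n) = c *: act a m + act a n.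

Lemma act0l (m : M) : act 0 m = 0.
Proof. by have := act_linl (-1) 0 0 m; rewrite !scaleN1r !addNr. Qed.

Lemma act0r (a : A) : act a 0 = 0.
Proof. by have := act_linr (-1) a 0 0; rewrite !scaleN1r !addNr. Qed.

Lemma actDl (a b : A) (m : M) : act (a + b) m = act a m + act b m.
Proof. by have := act_linl 1 a b m; rewrite !scale1r. Qed.

Lemma act_suml (s : seq int) (f : int -> A) (m : M) :
  act (\sum_(j <- s) f j) m = \sum_(j <- s) act (f j) m.
Proof. exact: (big_morph (act^~ m) (fun a b => actDl a b m) (act0l m)). Qed.

End ActionLinearity.

Definition unstable_on_E7_pieces (K : fieldType) (p : nat) (A : algType K)
    (G F : int -> A -> Prop) (M : lmodType K) (GM : int -> M -> Prop)
    (act : A -> M -> M) : Prop :=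
  forall (i : int) (e : int) (k : int), e \in [:: 0; 1] -> k < 2 * i + e ->
    forall (a : A) (m : M),
      F (2 * i + e) a -> G (2 * i * (p%:Z - 1) + e) a -> GM k m -> act a m = 0.

(* Necessity: F_{2i+e} is contained in F_{k+1} when k < 2i + e. *)
Lemma unstable_on_E7_pieces_of_unstable (K : fieldType) (p : nat)
    (A : algType K) (G F : int -> A -> Prop) (M : lmodType K)
    (GM : int -> M -> Prop) (act : A -> M -> M) :
  (forall i a, F (i + 1) a -> F i a) ->
  unstable F GM act -> unstable_on_E7_pieces p G F GM act.
Proof.
move=> F_decr unst i e k _ hk a m hFa _ hm; apply: (unst k) => //.
by apply: (filtration_antitone F_decr _ hFa); lia.
Qed.

Section Criterion.
Variables (K : fieldType) (p : nat) (A : algType K) (G F : int -> A -> Prop).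
Hypothesis p_ge2 : (2 <= p)%N.
Hypothesis G_subspace : forall j, subspace (G j).
Hypothesis G_one : G 0 1.
Hypothesis G_mul : forall (j k : int) (a b : A), G j a -> G k b -> G (j + k) (a * b).
Hypothesis F_decr : forall i a, F (i + 1) a -> F i a.
Hypothesis F_homog : forall i a, F i a -> exists (s : seq int) (f : int -> A),
  (forall j, G j (f j) /\ F i (f j)) /\ a = \sum_(j <- s) f j.
Hypotheses (hE1 : E1 F) (hE2 : E2 F) (hE6 : E6 p G F) (hE7 : E7 p G F)
  (hE8 : E8 p G F).

(* A homogeneous element lying in a filtration level beyond its degree is zero:
   by (E6) it lies in every higher level, hence in all of them, and (E2). *)
Lemma deep_homogeneous_zero (s j : int) (b : A) :
  0 <= s -> j < s -> F s b -> G j b -> b = 0.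
Proof.
move=> s0 js hFs hGb; apply: hE2 => i.
have [le_is | lt_si] := leP i s; first exact: filtration_antitone le_is hFs.
apply: (@int_ind_up (fun t => F t b) s) => //; last by lia.
move=> t hst hFt; have [i' [e' [he' ht]]] := int_parity t.
rewrite ht in hFt *; apply: (@hE6 i' j e' he' _ b hFt hGb); left.
by apply: below_diagonal => //; lia.
Qed.

Lemma nonzero_pieces_on_E8_lines (s j : int) : 1 <= s ->
  E_zero G F s j \/ exists i e J : int, [/\ 0 <= i, e \in [:: 0; 1], 0 <= J,
     2 * i + e - J = s & 2 * i * (p%:Z - 1) + e + J = j].
Proof.
move=> s1; have [i' [e' [he' hs]]] := int_parity s; subst s.
have [hj | hj] := ltP j (2 * i' * (p%:Z - 1) + e').
  by left; apply: hE6 => //; left.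
have [hr | hr] := boolP (let r := ((2 * i' + e' + j) %% (2 * p%:Z))%Z in
                          (r == 0) || (r == 2)).
  by right; apply: E8_line.
by left; apply: hE6 => //; right; move: hr; rewrite /= negb_or => /andP.
Qed.

Variables (M : lmodType K) (GM : int -> M -> Prop) (act : A -> M -> M).
Hypothesis act_linl :
  forall (c : K) (a b : A) (m : M), act (c *: a + b) m = c *: act a m + act b m.
Hypothesis act_linr :
  forall (c : K) (a : A) (m n : M), act a (c *: m + n) = c *: act a m + act a n.
Hypothesis act_one : forall m : M, act 1 m = m.
Hypothesis act_mul : forall (a b : A) (m : M), act (a * b) m = act a (act b m).
Hypothesis act_deg :
  forall (j k : int) (a : A) (m : M), G j a -> GM k m -> GM (j + k) (act a m).
Hypothesis criterion : unstable_on_E7_pieces p G F GM act.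

(* The criterion applied to the unit, which lies in F_0 in degree 0, shows
   that M has no nonzero elements of negative degree. *)
Lemma negative_degree_zero (n : int) (m : M) : n < 0 -> GM n m -> m = 0.
Proof.
move=> n_neg hm; rewrite -[m]act_one; apply: (@criterion 0 0 n) => //.
  exact: hE1.
by rewrite mulr0 mul0r addr0.
Qed.

(* The inductive step: if F_{s+1} in degree j kills m in M^n, n < s, then so
   does F_s, using the decomposition b = (b - g c) + g c given by (E7), (E8). *)
Lemma kill_step (n s j : int) (m : M) : GM n m -> n < s -> 1 <= s ->
  (forall b, F (s + 1) b -> G j b -> act b m = 0) ->
  forall b, F s b -> G j b -> act b m = 0.
Proof.
move=> hm ns s1 IH b hFb hGb.
have [E0 | [i [e [J [i0 he J0 hs hj]]]]] := @nonzero_pieces_on_E8_lines s j s1.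
  exact: IH (E0 _ hFb hGb) hGb.
have [g [hFg hGg hnFg _]] := @hE7 i e i0 he.
have [_ onto] := @hE8 i J e i0 J0 he g hFg hGg hnFg.
have [c [hGc hFr]] := onto b (ltac:(by rewrite hs)) (ltac:(by rewrite hj)).
have hGgc : G j (g * c) by rewrite -hj; exact: G_mul.
rewrite -(subrK (g * c) b) actDl // act_mul.
rewrite (@criterion i e (J + n) he _ _ _ hFg hGg (act_deg hGc hm)); last by lia.
rewrite addr0; apply: IH; first by rewrite -hs.
exact: subspaceB.
Qed.

Lemma homogeneous_unstable (n j : int) (m : M) (b : A) :
  0 <= n -> GM n m -> G j b -> F (n + 1) b -> act b m = 0.
Proof.
move=> n0 hm hGb hFb.
suff : forall s : int, n + 1 <= s -> forall b, F s b -> G j b -> act b m = 0.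
  by apply; rewrite ?lexx.
apply: (@int_ind_down _ _ (j + 1)).
- move=> s hns hjs b' hF hG.
  by rewrite (deep_homogeneous_zero _ _ hF hG) ?act0l //; lia.
- by move=> s hs; apply: kill_step hm _ _ => //; lia.
Qed.

Lemma unstable_of_unstable_on_E7_pieces : unstable F GM act.
Proof.
move=> n a m hFa hm.
have [n_neg | n_nonneg] := ltP n 0.
  by rewrite (negative_degree_zero n_neg hm) act0r.
have [s [f [hf ->]]] := F_homog hFa.
rewrite act_suml // big1 // => j _; have [hGf hFf] := hf j.
exact: homogeneous_unstable hGf hFf.
Qed.

End Criterion.

Unset Implicit Arguments.

Theorem proposition3p5 (K : fieldType) (p : nat) (A : algType K)
  (G F : int -> A -> Prop)
  (hp : prime p) (hchar : p \in [pchar K])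
  (hA : graded_alg G) (hF : graded_filtration G F)
  (hE1 : E1 F) (hE2 : E2 F) (hE3 : E3 F) (hE4 : E4 G F)
  (hE6 : E6 p G F) (hE7 : E7 p G F) (hE8 : E8 p G F)
  (M : lmodType K) (GM : int -> M -> Prop) (act : A -> M -> M)
  (hM : graded_module G GM act) :
  unstable F GM act <->
  (forall (i : int) (e : int) (k : int), e \in [:: 0; 1] -> k < 2 * i + e ->
     forall (a : A) (m : M),
       F (2 * i + e) a -> G (2 * i * (p%:Z - 1) + e) a -> GM k m ->
       act a m = 0).
Proof.
case: hA => [[G_subspace _ _] G_one G_mul]; case: hF => [_ F_decr F_homog].
case: hM => [_ [act_linl [act_linr [act_one [act_mul act_deg]]]]].
split; first exact: unstable_on_E7_pieces_of_unstable.
exact: (unstable_of_unstable_on_E7_pieces (prime_gt1 hp) G_subspace G_one G_mul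
          F_decr F_homog hE1 hE2 hE6 hE7 hE8 act_linl act_linr act_one act_mul
          act_deg).
Qed.
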